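(* Let $0\to M\xrightarrow{i}\Lambda\xrightarrow{d}B\to0$ be an exact sequence of lattices, $P\subset\Lambda_\mathbb{Q}$ a polyhedron, and $F\subset P$ an $M$-stable face. Then $(N_{F_M}P_M)^\vee=(N_FP)^\vee\cap M_\mathbb{Q}$.
   Context: Notation: $P_M=P\cap M_\mathbb{Q}$, $F_M=F\cap M_\mathbb{Q}$ (identifying $M$ with $i(M)$). For $y\in\Lambda^\vee_\mathbb{Q}$, $\mathrm{face}_y(P)=\{x\in P:\langle x,y\rangle=\min_P\langle-,y\rangle\}$; faces are the nonempty sets of this form; $N_FP=\{y\in\Lambda^\vee_\mathbb{Q}:\mathrm{face}_y(P)\supset F\}$, and analogously $N_{F_M}P_M\subset M^\vee_\mathbb{Q}$. For a cone $\sigma$ in a dual space, $\sigma^\vee$ denotes the dual cone $\{x:\langle x,\sigma\rangle\ge0\}$. $\langle F\rangle$ is the span of the differences of elements of $F$; $F$ is $M$-stable if the relative interior of $F$ meets $M_\mathbb{Q}$ and $\langle F\rangle+M_\mathbb{Q}=\Lambda_\mathbb{Q}$. *)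

From HB Require Import structures.
From mathcomp Require Import all_boot all_order all_algebra.
Set Implicit Arguments. Unset Strict Implicit. Unset Printing Implicit Defensive.
Import Order.TTheory GRing.Theory Num.Theory.
Local Open Scope ring_scope.

(* Lattices are modelled as Z^r = 'rV[int]_r (every lattice is free of finite
   rank); L_Q = L (x) Q is 'rV[rat]_r, and its dual L^v_Q is again 'rV[rat]_r
   with the standard pairing. *)

Definition qset (r : nat) := 'rV[rat]_r -> Prop.

Definition pair (r : nat) (x y : 'rV[rat]_r) : rat := \sum_(j < r) x 0 j * y 0 j.

Definition is_polyhedron (r : nat) (P : qset r) : Prop :=
  exists (s : nat) (A : 'I_s -> 'rV[rat]_r) (b : 'I_s -> rat),
    forall x, P x <-> (forall k, b k <= pair x (A k)).

Definition face_y (r : nat) (y : 'rV[rat]_r) (P : qset r) : qset r :=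
  fun x => P x /\ forall p, P p -> pair x y <= pair p y.

Definition is_face (r : nat) (P F : qset r) : Prop :=
  (exists y, forall x, F x <-> face_y y P x) /\ (exists x, F x).

Definition normal_cone (r : nat) (P F : qset r) : qset r :=
  fun y => forall x, F x -> face_y y P x.

Definition dual_cone (r : nat) (sigma : qset r) : qset r :=
  fun x => forall y, sigma y -> 0 <= pair x y.

Definition span_diff (r : nat) (F : qset r) : qset r :=
  fun v => exists (s : nat) (c : 'I_s -> rat) (a b : 'I_s -> 'rV[rat]_r),
    (forall k, F (a k) /\ F (b k)) /\ v = \sum_(k < s) c k *: (a k - b k).

Definition relint (r : nat) (F : qset r) : qset r :=
  fun x => F x /\ exists e : rat, 0 < e /\
    forall v, span_diff F v -> (forall j, `|v 0 j| <= e) -> F (x + v).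

Definition mxQ (p q : nat) (A : 'M[int]_(p, q)) : 'M[rat]_(p, q) := map_mx intr A.

(* 0 -> Z^m --i--> Z^n --d--> Z^k -> 0 is exact (maps act on row vectors) *)
Definition short_exact (m n k : nat) (i : 'M[int]_(m, n)) (d : 'M[int]_(n, k)) : Prop :=
  [/\ (forall u : 'rV[int]_m, u *m i = 0 -> u = 0),
      (forall w : 'rV[int]_k, exists v : 'rV[int]_n, v *m d = w) &
      (forall v : 'rV[int]_n, v *m d = 0 <-> exists u : 'rV[int]_m, v = u *m i)].

(* pullback of a subset of Lambda_Q to M_Q along i (i.e. S ∩ M_Q, identifying
   M with i(M)) *)
Definition restrict (m n : nat) (i : 'M[int]_(m, n)) (S : qset n) : qset m :=
  fun u => S (u *m mxQ i).

Definition M_stable (m n : nat) (i : 'M[int]_(m, n)) (F : qset n) : Prop :=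
  (exists u : 'rV[rat]_m, relint F (u *m mxQ i)) /\
  (forall x : 'rV[rat]_n, exists v (u : 'rV[rat]_m), span_diff F v /\ x = v + u *m mxQ i).

(* Write P = {x | b_k <= <x, A_k>} and pick x0 = i(u0) in the relative interior
   of F.  Since x0 can be pushed slightly past any other point of F, every
   constraint tight at x0 is tight on all of F.  Both dual cones then coincide
   with the tangent cone {w | <w, A_k> >= 0 for every k tight at x0}: its
   generators A_k (resp. their restrictions to M) lie in the normal cones, and
   conversely for w in the tangent cone x0 + e w stays in P for small e > 0, so
   every y minimised on P at x0 has <w, y> >= 0. *)

From mathcomp Require Import all_boot all_order all_algebra lra.
Set Implicit Arguments. Unset Strict Implicit. Unset Printing Implicit Defensive.
Import Order.TTheory GRing.Theory Num.Theory.
Local Open Scope ring_scope.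

Lemma pairE r (x y : 'rV[rat]_r) : pair x y = (x *m y^T) ord0 ord0.
Proof. by rewrite /pair mxE; apply: eq_bigr => j _; rewrite mxE. Qed.

Lemma pairDl r (x y a : 'rV[rat]_r) : pair (x + y) a = pair x a + pair y a.
Proof. by rewrite !pairE mulmxDl mxE. Qed.

Lemma pairBl r (x y a : 'rV[rat]_r) : pair (x - y) a = pair x a - pair y a.
Proof. by rewrite !pairE mulmxBl !mxE. Qed.

Lemma pairZl r (c : rat) (x a : 'rV[rat]_r) : pair (c *: x) a = c * pair x a.
Proof. by rewrite !pairE -scalemxAl mxE. Qed.

Lemma pair_mulmxl m n (u : 'rV[rat]_m) (I : 'M[rat]_(m, n)) a :
  pair (u *m I) a = pair u (a *m I^T).
Proof. by rewrite !pairE trmx_mul trmxK mulmxA. Qed.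

Lemma finite_pos_lower_bound (s : nat) (f : 'I_s -> rat) : (forall k, 0 < f k) ->
  exists2 e : rat, 0 < e & forall k, e <= f k.
Proof.
move=> f_gt0; exists (\big[Order.min/1]_(k < s) f k) => [|k]; last exact: bigmin_le.
by elim/big_ind: _ => // x y x_gt0 y_gt0; rewrite lt_min x_gt0 y_gt0.
Qed.

Lemma scale_le_div_norm (e c t : rat) : 0 <= e -> e <= c / (1 + `|t|) ->
  `|e * t| <= c /\ - c <= e * t.
Proof.
move=> e_ge0; have den_gt0 : 0 < 1 + `|t| by rewrite ltr_pwDl.
rewrite ler_pdivlMr // mulrDr mulr1 => le_c.
rewrite normrM (ger0_norm e_ge0).
have := mulr_ge0 e_ge0 (normr_ge0 t).
by have := ler_wpM2l e_ge0 (ler_norm (- t)); rewrite mulrN normrN; lra.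
Qed.

Definition tight r s (A : 'I_s -> 'rV[rat]_r) (b : 'I_s -> rat) x k : Prop :=
  pair x (A k) = b k.

Section Polyhedron.

Variables (r s : nat) (A : 'I_s -> 'rV[rat]_r) (b : 'I_s -> rat).

Lemma feasible_direction x0 w :
  (forall k, b k <= pair x0 (A k)) ->
  (forall k, tight A b x0 k -> 0 <= pair w (A k)) ->
  exists2 e : rat, 0 < e & forall k, b k <= pair (x0 + e *: w) (A k).
Proof.
move=> Px0 w_tangent.
pose f k := if pair x0 (A k) == b k then 1
            else (pair x0 (A k) - b k) / (1 + `|pair w (A k)|).
have f_gt0 k : 0 < f k.
  rewrite /f; case: eqP => [//|slack]; apply: divr_gt0; last by rewrite ltr_pwDl.
  by rewrite subr_gt0 lt_neqAle Px0 andbT; apply/eqP => /esym.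
have [e e_gt0 le_e] := finite_pos_lower_bound f_gt0.
exists e => // k; rewrite pairDl pairZl; have := le_e k; rewrite /f.
case: eqP => [act _ | _ /(scale_le_div_norm (ltW e_gt0)) [_]]; last by lra.
by rewrite act lerDl (mulr_ge0 (ltW e_gt0) (w_tangent _ act)).
Qed.

Lemma relint_extend (F : qset r) x0 x : relint F x0 -> F x ->
  exists2 e : rat, 0 < e & F (x0 + e *: (x0 - x)).
Proof.
move=> [Fx0 [e [e_gt0 ball_in]]] Fx.
have [eps eps_gt0 le_eps] :=
  @finite_pos_lower_bound r (fun j => e / (1 + `|x0 0 j - x 0 j|))
    (fun j => divr_gt0 e_gt0 (ltr_pwDl ltr01 (normr_ge0 _))).
exists eps => //; apply: ball_in => [|j].
  exists 1%N, (fun _ => eps), (fun _ => x0), (fun _ => x).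
  by rewrite big_ord1.
rewrite !mxE; exact: (scale_le_div_norm (ltW eps_gt0) (le_eps j)).1.
Qed.

Lemma tight_propagate (F : qset r) x0 x k :
  (forall x, F x -> forall k, b k <= pair x (A k)) ->
  relint F x0 -> F x -> tight A b x0 k -> tight A b x k.
Proof.
move=> F_sub relint_x0 Fx act; have [e e_gt0 F_ext] := relint_extend relint_x0 Fx.
have := F_sub _ F_ext k; rewrite pairDl pairZl pairBl act -lerBlDl subrr.
rewrite pmulr_rge0 // subr_ge0 => le_xb.
by apply/eqP; rewrite eq_le le_xb F_sub.
Qed.

End Polyhedron.

Section PullbackTangentCone.

Variables (m n s : nat) (I : 'M[rat]_(m, n)).
Variables (A : 'I_s -> 'rV[rat]_n) (b : 'I_s -> rat) (P F : qset n) (Q G : qset m).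
Hypothesis P_def : forall x, P x <-> forall k, b k <= pair x (A k).
Hypothesis F_sub : forall x, F x -> P x.
Hypothesis Q_def : forall v, Q v <-> P (v *m I).
Hypothesis G_sub : forall v, G v -> F (v *m I).
Variables (x0 : 'rV[rat]_n) (u0 : 'rV[rat]_m).
Hypothesis G_u0 : G u0.
Hypothesis u0_image : u0 *m I = x0.
Hypothesis tight_on_F : forall x k, F x -> tight A b x0 k -> tight A b x k.

Lemma dual_normal_cone_tangent u :
  dual_cone (normal_cone Q G) u <->
  forall k, tight A b x0 k -> 0 <= pair (u *m I) (A k).
Proof.
split=> [dual_u k act | tangent y Ny].
  rewrite pair_mulmxl; apply: dual_u => v Gv.
  have Fv := G_sub Gv; split; first exact/Q_def/F_sub.
  have -> : pair v (A k *m I^T) = b k by rewrite -pair_mulmxl; exact: tight_on_F.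
  by move=> p /Q_def/P_def/(_ k); rewrite pair_mulmxl.
have P_x0 : forall k, b k <= pair x0 (A k) by rewrite -u0_image; apply/P_def/F_sub/G_sub.
have [e e_gt0 P_step] := feasible_direction P_x0 tangent.
have [_ min_u0] := Ny u0 G_u0.
have /min_u0 : Q (u0 + e *: u) by apply/Q_def/P_def; rewrite mulmxDl -scalemxAl u0_image.
by rewrite pairDl pairZl -lerBlDl subrr pmulr_rge0.
Qed.

End PullbackTangentCone.

Theorem mainTheorem6 (m n k : nat) (i : 'M[int]_(m, n)) (d : 'M[int]_(n, k))
  (P F : qset n) :
  short_exact i d ->
  is_polyhedron P ->
  is_face P F ->
  M_stable i F ->
  forall u : 'rV[rat]_m,
    dual_cone (normal_cone (restrict i P) (restrict i F)) u <->
    dual_cone (normal_cone P F) (u *m mxQ i).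
Proof.
move=> _ [s [A [b P_def]]] [[y F_face] _] [[u0 relint_x0] _] u.
set x0 := u0 *m mxQ i in relint_x0 *.
have F_sub x : F x -> P x by case/F_face.
have F_x0 : F x0 by case: relint_x0.
have tight_on_F x l : F x -> tight A b x0 l -> tight A b x l.
  by apply: tight_propagate relint_x0 => z /F_sub/P_def.
have P_id v : P v <-> P (v *m 1%:M) by rewrite mulmx1.
have F_id v : F v -> F (v *m 1%:M) by rewrite mulmx1.
rewrite (dual_normal_cone_tangent P_def F_sub (fun v => iff_refl _) (fun v Fv => Fv)
           F_x0 erefl tight_on_F).
by rewrite (dual_normal_cone_tangent P_def F_sub P_id F_id F_x0 (mulmx1 x0) tight_on_F) mulmx1.
Qed.
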